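(* Let $(X,S_b)$ be an $S_b$-metric space with $b\geq 1$, let $x_0\in X$, and let $f:X\to X$ be a self-mapping for which there exist $\alpha\in(0,1)$ and a non-decreasing function $\varphi:(0,\infty)\to(1,\infty)$ such that for all $x\in X$, $$S_b(x,x,fx)>0 \implies \varphi\big(S_b(x,x,fx)\big)\leq \big[\varphi\big(S_b(x,x,x_0)\big)\big]^{\alpha}$$ (i.e. $f$ is a Jleli-Samet type $D_{x_0}$-$S_b$-contraction). Let $$r=\inf\{S_b(x,x,fx): x\neq fx,\ x\in X\}.$$ Then $f$ fixes the disc $D^{S_b}_{x_0,r}=\{x\in X: S_b(x,x,x_0)\leq r\}$, i.e. $fx=x$ for every $x\in D^{S_b}_{x_0,r}$.
   Context: An $S_b$-metric space $(X,S_b)$ with constant $b\geq 1$ is a nonempty set $X$ with a function $S_b:X\times X\times X\to[0,\infty)$ such that for all $x,y,z,a\in X$: (1) $S_b(x,y,z)=0$ if and only if $x=y=z$; (2) $S_b(x,y,z)\leq b[S_b(x,x,a)+S_b(y,y,a)+S_b(z,z,a)]$. A mapping $f$ fixes a set $\mathcal{F}\subseteq X$ if $\mathcal{F}$ is contained in the fixed point set $\{x\in X: fx=x\}$. *)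

From Stdlib Require Import Reals.
From Coquelicot Require Import Coquelicot.
Open Scope R_scope.

Definition Sb_metric_space (X : Type) (S : X -> X -> X -> R) (b : R) : Prop :=
  1 <= b /\
  (forall x y z, 0 <= S x y z) /\
  (forall x y z, S x y z = 0 <-> (x = y /\ y = z)) /\
  (forall x y z a, S x y z <= b * (S x x a + S y y a + S z z a)).

Definition Sb_disc {X : Type} (S : X -> X -> X -> R) (x0 : X) (r : Rbar) : X -> Prop :=
  fun x => Rbar_le (Finite (S x x x0)) r.

Definition fixes_set {X : Type} (f : X -> X) (F : X -> Prop) : Prop :=
  forall x, F x -> f x = x.

(* Jleli-Samet type D_{x0}-S_b-contraction.  phi : (0,oo) -> (1,oo) non-decreasing
   is modelled as a total function R -> R whose behaviour is constrained on (0,oo).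
   The contractive inequality phi(S(x,x,fx)) <= phi(S(x,x,x0))^alpha only makes sense
   when S(x,x,x0) lies in the domain (0,oo) of phi; we require this explicitly. *)
Definition JS_Dx0_Sb_contraction {X : Type} (S : X -> X -> X -> R) (f : X -> X)
  (x0 : X) (alpha : R) (phi : R -> R) : Prop :=
  0 < alpha < 1 /\
  (forall s t, 0 < s -> s <= t -> phi s <= phi t) /\
  (forall s, 0 < s -> 1 < phi s) /\
  (forall x, 0 < S x x (f x) ->
     0 < S x x x0 /\ phi (S x x (f x)) <= Rpower (phi (S x x x0)) alpha).

(* r = inf { S(x,x,fx) | x <> fx }  (= +oo if f has no non-fixed points). *)
Definition r_inf {X : Type} (S : X -> X -> X -> R) (f : X -> X) : Rbar :=
  Glb_Rbar (fun s => exists x, x <> f x /\ s = S x x (f x)).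

(* A point x of the disc that is moved by f satisfies S(x,x,x0) <= r <= S(x,x,fx).
   The contraction, phi > 1 and alpha < 1 give
   phi(S(x,x,fx)) <= phi(S(x,x,x0))^alpha < phi(S(x,x,x0)), so by monotonicity of
   phi we get S(x,x,fx) < S(x,x,x0), a contradiction. *)
From Stdlib Require Import Reals Lra Classical.
From Coquelicot Require Import Coquelicot.
Open Scope R_scope.

Lemma Sb_pos_neq (X : Type) (S : X -> X -> X -> R) (b : R) (x y : X) :
  Sb_metric_space X S b -> x <> y -> 0 < S x x y.
Proof.
  intros [_ [Hnn [Hzero _]]] Hxy.
  destruct (Rle_lt_or_eq_dec _ _ (Hnn x x y)) as [Hpos | Hnull]; [exact Hpos |].
  exfalso; apply Hxy.
  now apply (proj2 (proj1 (Hzero x x y) (eq_sym Hnull))).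
Qed.

Lemma r_inf_le_displacement (X : Type) (S : X -> X -> X -> R) (f : X -> X) (x : X) :
  x <> f x -> Rbar_le (r_inf S f) (S x x (f x)).
Proof.
  intros Hmoved.
  apply (proj1 (Glb_Rbar_correct _)).
  now exists x.
Qed.

Lemma Rpower_lt_self (a alpha : R) : 1 < a -> alpha < 1 -> Rpower a alpha < a.
Proof.
  intros Ha Halpha.
  rewrite <- (Rpower_1 a) at 2 by lra.
  now apply Rpower_lt.
Qed.

Lemma JS_contraction_displacement_lt (X : Type) (S : X -> X -> X -> R)
  (f : X -> X) (x0 : X) (alpha : R) (phi : R -> R) (x : X) :
  JS_Dx0_Sb_contraction S f x0 alpha phi ->
  0 < S x x (f x) -> S x x (f x) < S x x x0.
Proof.
  intros [[_ Halpha] [Hmono [Hphi_gt1 Hcontr]]] Hpos.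
  destruct (Hcontr x Hpos) as [Hd_pos Hineq].
  assert (Hstrict : Rpower (phi (S x x x0)) alpha < phi (S x x x0))
    by (apply Rpower_lt_self; [apply Hphi_gt1; exact Hd_pos | exact Halpha]).
  apply Rnot_le_lt; intros Hle.
  pose proof (Hmono _ _ Hd_pos Hle).
  lra.
Qed.

Theorem theorem2p5 (X : Type) (S : X -> X -> X -> R) (b : R)
  (HS : Sb_metric_space X S b) (x0 : X) (f : X -> X)
  (alpha : R) (phi : R -> R)
  (Hf : JS_Dx0_Sb_contraction S f x0 alpha phi) :
  fixes_set f (Sb_disc S x0 (r_inf S f)).
Proof.
  intros x Hdisc.
  destruct (classic (f x = x)) as [Hfixed | Hmoved]; [exact Hfixed | exfalso].
  assert (Hpos : 0 < S x x (f x)) by (apply (Sb_pos_neq X S b); congruence).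
  assert (Hlt := JS_contraction_displacement_lt X S f x0 alpha phi x Hf Hpos).
  assert (Hle : S x x x0 <= S x x (f x)).
  { apply (Rbar_le_trans (S x x x0) (r_inf S f) (S x x (f x)) Hdisc).
    apply r_inf_le_displacement; congruence. }
  lra.
Qed.
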